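(* For all $j_1,j_2\in\tfrac12\mathbb{N}^+$, every entry of $R^{(j_1,j_2)}(t)$ (a Laurent polynomial in $t$) has degree at most $4j_1j_2$ in $t$, and \[ \lim_{t\to\infty}\frac{R^{(j_1,j_2)}(t)}{t^{4j_1j_2}}=q^{2j_1j_2}\widehat R^{(j_1,j_2)}, \] i.e. the matrix of coefficients of $t^{4j_1j_2}$ in $R^{(j_1,j_2)}(t)$ equals $q^{2j_1j_2}\widehat R^{(j_1,j_2)}$.
   Context: $\mathbb{F}$ is a field of characteristic zero in which every element has a square root; $q\in\mathbb{F}$ nonzero, not a root of unity, with fixed square root $q^{1/2}$ ($q^{k/2}:=(q^{1/2})^k$); other $(\cdot)^{1/2}$ are fixed square roots in $\mathbb{F}$. $[n]_q=\frac{q^n-q^{-n}}{q-q^{-1}}$, $c(t)=t-t^{-1}$, $\tfrac12\mathbb{N}^+=\{\tfrac12,1,\tfrac32,\dots\}$, $t$ an indeterminate, $\otimes$ Kronecker product. Leg notation: for factors $\mathbb{F}^{n_1}\otimes\mathbb{F}^{n_2}\otimes\mathbb{F}^{n_3}$, $X_{12}=X\otimes I_{n_3}$, $X_{23}=I_{n_1}\otimes X$, $X_{13}=P(X\otimes I_{n_2})P$ with $P$ the flip of factors 2,3; for non-square $Y$, $Y_{12}=Y\otimes I_{n_3}$, $Y_{23}=I_{n_1}\otimes Y$. For $j\in\tfrac12\mathbb{N}^+$: $\mathcal{E}^{(j+\frac12)}$ is $(4j+2)\times(2j+2)$ with only nonzero entries $\mathcal{E}_{(a,a)}=\big(\frac{[2j+2-a]_q}{[2j+1]_q}\big)^{1/2}$,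 $\mathcal{E}_{(a+2j+1,a+1)}=\big(\frac{[a]_q}{[2j+1]_q}\big)^{1/2}$ ($1\le a\le 2j+1$); $\mathcal{F}^{(j+\frac12)}$ is $(2j+2)\times(4j+2)$ with only nonzero entries $\mathcal{F}_{(a,a)}=\frac{([2j+2-a]_q[2j+1]_q)^{1/2}}{[2j+2-a]_q+[a-1]_q}$, $\mathcal{F}_{(a+1,a+2j+1)}=\frac{([a]_q[2j+1]_q)^{1/2}}{[2j+1-a]_q+[a]_q}$ ($1\le a\le 2j+1$). $R^{(\frac12,\frac12)}(t)$ is the $4\times4$ matrix with rows $(c(qt),0,0,0),(0,c(t),c(q),0),(0,c(q),c(t),0),(0,0,0,c(qt))$; recursively $R^{(\frac12,j+\frac12)}(t)=\mathcal{F}^{(j+\frac12)}_{23}R^{(\frac12,j)}_{13}(q^{-1/2}t)R^{(\frac12,\frac12)}_{12}(q^{j}t)\mathcal{E}^{(j+\frac12)}_{23}$ (factor sizes $2,2,2j+1$) and $R^{(j_1+\frac12,j_2)}(t)=\mathcal{F}^{(j_1+\frac12)}_{12}R^{(\frac12,j_2)}_{13}(q^{-j_1}t)R^{(j_1,j_2)}_{23}(q^{1/2}t)\mathcal{E}^{(j_1+\frac12)}_{12}$ (factor sizes $2,2j_1+1,2j_2+1$). $\widehat R^{(j_1,j_2)}=q^{2\,\mathrm{diag}(j_1,\dots,-j_1)\otimes\mathrm{diag}(j_2,\dots,-j_2)}$ (diagonal with entries $q^{2\alpha\beta}$). *)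

From HB Require Import structures.
From mathcomp Require Import all_boot all_order all_algebra.
From mathcomp Require Import mxtens.
Set Implicit Arguments. Unset Strict Implicit. Unset Printing Implicit Defensive.
Import Order.TTheory GRing.Theory Num.Theory.
Local Open Scope ring_scope.

(* Conventions.
   - A half-integer j in (1/2)N^+ is encoded by the natural number n with
     2j = n.+1 (so the dimension 2j+1 is n.+2).
   - Kronecker products are mathcomp-real-closed's [tensmx] (A *t B), whose
     index convention is (i1,i2) |-> i1 * dim2 + i2 (the usual Kronecker one).
   - Laurent-polynomial matrices in t: a pair (s, P) with P a matrix of
     ordinary polynomials, standing for t^(-s) * P(t).  The coefficient of
     t^d (d >= 0) of the entry (i,j) is P i j at index d + s, and the entry
     has degree <= d iff size (P i j) <= d + s + 1.  These notions do not
     depend on the representative. *)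

Section RMatrices.
Variable F : fieldType.
Variable sqrtF : F -> F.
Variable qh : F.

Definition qq : F := qh ^+ 2.
Definition qnum (n : nat) : F := (qq ^+ n - qq ^- n) / (qq - qq^-1).

Record lmx (m n : nat) := LMx { lsh : nat; lpm : 'M[{poly F}]_(m, n) }.

Definition leval m n (A : lmx m n) (t : F) : 'M[F]_(m, n) :=
  map_mx (fun p => t ^- lsh A * p.[t]) (lpm A).

Definition lmul m n p (A : lmx m n) (B : lmx n p) : lmx m p :=
  LMx (lsh A + lsh B) (lpm A *m lpm B).
Definition lconst m n (M : 'M[F]_(m, n)) : lmx m n := LMx 0 (map_mx polyC M).
(* A(t) |-> A(c t) *)
Definition lscale m n (c : F) (A : lmx m n) : lmx m n :=
  LMx (lsh A) (map_mx (fun p => c ^- lsh A *: (p \Po (c *: 'X))) (lpm A)).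
Definition lcast m n m' n' (e : (m = m') * (n = n')) (A : lmx m n) : lmx m' n' :=
  LMx (lsh A) (castmx e (lpm A)).

Definition ldeg_le m n (d : nat) (A : lmx m n) : Prop :=
  forall i j, (size (lpm A i j) <= d + lsh A + 1)%N.
Definition lcoef m n (d : nat) (A : lmx m n) : 'M[F]_(m, n) :=
  \matrix_(i, j) (lpm A i j)`_(d + lsh A).

Definition leg12 n1 n2 n3 (X : lmx (n1 * n2) (n1 * n2)) : lmx (n1 * n2 * n3) (n1 * n2 * n3) :=
  LMx (lsh X) (lpm X *t (1%:M : 'M_n3)).
Definition leg23 n1 n2 n3 (X : lmx (n2 * n3) (n2 * n3)) : lmx (n1 * n2 * n3) (n1 * n2 * n3) :=
  lcast (mulnA n1 n2 n3, mulnA n1 n2 n3) (LMx (lsh X) ((1%:M : 'M_n1) *t lpm X)).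
Definition flipmx n1 n2 n3 : 'M[{poly F}]_(n1 * n2 * n3, n1 * n3 * n2) :=
  \matrix_(i, k)
    (let: (i12, i3) := mxtens_unindex i in let: (i1, i2) := mxtens_unindex i12 in
     let: (k13, k2) := mxtens_unindex k in let: (k1, k3) := mxtens_unindex k13 in
     ((i1 == k1) && (i2 == k2) && (i3 == k3))%:R).
Definition leg13 n1 n2 n3 (X : lmx (n1 * n3) (n1 * n3)) : lmx (n1 * n2 * n3) (n1 * n2 * n3) :=
  LMx (lsh X) (flipmx n1 n2 n3 *m (lpm X *t (1%:M : 'M_n2)) *m (flipmx n1 n2 n3)^T).

(* E^(j+1/2) and F^(j+1/2) for 2j = N (N >= 1); 0-based indices.
   Square roots of products/quotients of quantum integers are taken as
   products/quotients of the fixed square roots. *)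
Definition Emx (N : nat) : 'M[F]_(2 * N.+1, N.+2) :=
  \matrix_(r, c)
    (if (r == c :> nat) && (c <= N)%N then sqrtF (qnum (N.+1 - r)%N) / sqrtF (qnum N.+1)
     else if ((r : nat) == (c : nat) + N)%N && (0 < c)%N then sqrtF (qnum c) / sqrtF (qnum N.+1)
     else 0).
Definition Fmx (N : nat) : 'M[F]_(N.+2, 2 * N.+1) :=
  \matrix_(r, c)
    (if (r == c :> nat) && (c <= N)%N then
       sqrtF (qnum (N.+1 - r)%N) * sqrtF (qnum N.+1) / (qnum (N.+1 - r)%N + qnum r)
     else if ((c : nat) == (r : nat) + N)%N && (0 < r)%N then
       sqrtF (qnum r) * sqrtF (qnum N.+1) / (qnum (N.+1 - r)%N + qnum r)
     else 0).

Definition R11 : lmx (2 * 2) (2 * 2) :=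
  LMx 1 (\matrix_(i, j)
    (if ((i == 0 :> nat) && (j == 0 :> nat)) || ((i == 3 :> nat) && (j == 3 :> nat))
     then qq *: 'X ^+ 2 - (qq^-1)%:P
     else if ((i == 1 :> nat) && (j == 1 :> nat)) || ((i == 2 :> nat) && (j == 2 :> nat))
     then 'X ^+ 2 - 1
     else if ((i == 1 :> nat) && (j == 2 :> nat)) || ((i == 2 :> nat) && (j == 1 :> nat))
     then (qq - qq^-1) *: 'X
     else 0)).

(* Rh n = R^(1/2, j) with 2j = n.+1 *)
Fixpoint Rh (n : nat) : lmx (2 * n.+2) (2 * n.+2) :=
  match n as n0 return lmx (2 * n0.+2) (2 * n0.+2) with
  | 0 => R11
  | m.+1 =>
    (* j = (m+1)/2, factor sizes 2, 2, 2j+1 = m.+2 *)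
    let F23 := lconst (castmx (erefl, mulnA 2%N 2%N m.+2)
                 ((1%:M : 'M[F]_2) *t Fmx m.+1)) in
    let R13 := @leg13 2%N 2%N m.+2 (lscale (qh ^-1) (Rh m)) in
    let R12 := @leg12 2%N 2%N m.+2 (lscale (qh ^+ m.+1) R11) in
    let E23 := lconst (castmx (mulnA 2%N 2%N m.+2, erefl)
                 ((1%:M : 'M[F]_2) *t Emx m.+1)) in
    lmul (lmul (lmul F23 R13) R12) E23
  end.

(* Rmat n1 n2 = R^(j1, j2) with 2 j1 = n1.+1, 2 j2 = n2.+1 *)
Fixpoint Rmat (n1 n2 : nat) : lmx (n1.+2 * n2.+2) (n1.+2 * n2.+2) :=
  match n1 as n0 return lmx (n0.+2 * n2.+2) (n0.+2 * n2.+2) with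
  | 0 => Rh n2
  | m.+1 =>
    (* j1 = (m+1)/2, factor sizes 2, 2 j1 + 1 = m.+2, 2 j2 + 1 = n2.+2 *)
    let F12 := lconst (Fmx m.+1 *t (1%:M : 'M[F]_(n2.+2))) in
    let R13 := @leg13 2%N m.+2 n2.+2 (lscale (qh ^- m.+1) (Rh n2)) in
    let R23 := @leg23 2%N m.+2 n2.+2 (lscale qh (Rmat m n2)) in
    let E12 := lconst (Emx m.+1 *t (1%:M : 'M[F]_(n2.+2))) in
    lmul (lmul (lmul F12 R13) R23) E12
  end.

(* hat R^(j1,j2): diagonal with entries q^(2 alpha beta) = qh^((2alpha)(2beta)),
   alpha = j1 - i1, beta = j2 - i2 (0-based i1, i2). *)
Definition Rhat (n1 n2 : nat) : 'M[F]_(n1.+2 * n2.+2) :=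
  \matrix_(i, k)
    (let: (i1, i2) := mxtens_unindex i in
     (i == k)%:R *
     qh ^ (((n1.+1)%:Z - 2 * (i1 : nat)%:Z) * ((n2.+1)%:Z - 2 * (i2 : nat)%:Z))).

End RMatrices.

From HB Require Import structures.
From mathcomp Require Import all_boot all_order all_algebra.
From mathcomp Require Import mxtens.
From mathcomp Require Import zify ring.
Set Implicit Arguments. Unset Strict Implicit. Unset Printing Implicit Defensive.
Import Order.TTheory GRing.Theory Num.Theory.
Local Open Scope ring_scope.

(* Write [ltop d A M] when the Laurent matrix A(t) has degree at most d and
   coefficient M at t^d.  This is multiplicative, constant matrices have top
   degree 0, substituting c t for t multiplies the top coefficient by c^d, and
   the leg embeddings merely reindex diagonal top coefficients.  The matrices
   ℱ = ℱ^(j+1/2) and ℰ = ℰ^(j+1/2) satisfy ℱ ℰ = 1, and ℱ only connects the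
   basis vector e_a ⊗ e_b of 𝔽^2 ⊗ 𝔽^(2j+1) to e_(a+b); hence ℱ D ℰ is
   diagonal whenever D is diagonal with entries depending on a+b only.  Along
   both recursions the top coefficients therefore stay diagonal, with entry
   q^(2 j1 j2 + 2 alpha beta) at the weights (alpha, beta); that the exponents
   add up is an identity of integers. *)

Local Notation idx := mxtens_index.
Local Notation unidx := mxtens_unindex.

Section TopCoefficient.
Variable F : fieldType.

Definition ltop m n d (A : lmx F m n) (M : 'M[F]_(m, n)) : Prop :=
  ldeg_le d A /\ lcoef d A = M.

Lemma poly_mul_top (p q : {poly F}) a b :
  (size p <= a.+1)%N -> (size q <= b.+1)%N ->
  (size (p * q)%R <= (a + b).+1)%N /\ (p * q)`_(a + b) = p`_a * q`_b.
Proof.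
move=> sz_p sz_q; split.
  by apply: leq_trans (size_polyMleq p q) _; have := leq_add sz_p sz_q; lia.
rewrite coefM (bigD1 (Ordinal (leq_addr b a.+1))) //= addKn big1 ?addr0 // => i.
rewrite -val_eqE /= neq_ltn => /orP[lt_ia | lt_ai].
  by rewrite [q`__](leq_sizeP _ _ sz_q) ?mulr0 //; case: i lt_ia => k /= _; lia.
by rewrite [p`__](leq_sizeP _ _ sz_p) ?mul0r.
Qed.

Lemma ltop_mul m n p d1 d2 (A : lmx F m n) (B : lmx F n p) M N :
  ltop d1 A M -> ltop d2 B N -> ltop (d1 + d2) (lmul A B) (M *m N).
Proof.
move=> [degA <-] [degB <-].
have top i l j : (size (lpm A i l * lpm B l j)%R <= (d1 + lsh A + (d2 + lsh B)).+1)%N /\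
    (lpm A i l * lpm B l j)`_(d1 + lsh A + (d2 + lsh B)) =
    (lpm A i l)`_(d1 + lsh A) * (lpm B l j)`_(d2 + lsh B).
  by apply: poly_mul_top; rewrite -addn1; [apply: degA | apply: degB].
have shE : (d1 + d2 + lsh (lmul A B) = d1 + lsh A + (d2 + lsh B))%N.
  by rewrite /= addnACA.
split=> [i j | ].
  rewrite /= mxE shE addn1; apply: leq_trans (size_sum _ _ _) _.
  by apply/bigmax_leqP => l _; case: (top i l j).
apply/matrixP=> i j; rewrite !mxE shE /= coef_sum; apply: eq_bigr => l _.
by case: (top i l j) => _ ->; rewrite !mxE.
Qed.

Lemma ltop_const m n (M : 'M[F]_(m, n)) : ltop 0 (lconst M) M.
Proof.
split=> [i j | ]; first by rewrite /= mxE size_polyC; case: (_ != 0).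
by apply/matrixP=> i j; rewrite !mxE coefC.
Qed.

Lemma coef_comp_scaleX (c : F) (p : {poly F}) k :
  (p \Po (c *: 'X))`_k = c ^+ k * p`_k.
Proof.
have -> : p \Po (c *: 'X) = \poly_(i < size p) (c ^+ i * p`_i).
  by rewrite comp_polyE poly_def; apply: eq_bigr => i _; rewrite exprZn scalerA mulrC.
rewrite coef_poly; case: ltnP => // le_pk.
by rewrite (leq_sizeP _ _ le_pk) ?mulr0.
Qed.

Lemma ltop_scale m n d (c : F) (A : lmx F m n) M : c != 0 ->
  ltop d A M -> ltop d (lscale c A) (c ^+ d *: M).
Proof.
move=> c_neq0 [degA <-]; split=> [i j | ].
  apply/leq_sizeP => k le_k; rewrite /= mxE coefZ coef_comp_scaleX.
  by rewrite (leq_sizeP _ _ (degA i j)) ?mulr0.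
apply/matrixP => i j; rewrite !mxE coefZ coef_comp_scaleX /= exprD.
by field; rewrite expf_neq0.
Qed.

Lemma sum_ord_eq n s (c : F) :
  \sum_(k < n) (k == s :> nat)%:R * c = (s < n)%:R * c.
Proof.
case: (ltnP s n) => [lt_sn | le_ns]; last first.
  by rewrite big1 ?mul0r // => k _; rewrite ltn_eqF ?mul0r // (leq_trans (ltn_ord k)).
rewrite (bigD1 (Ordinal lt_sn)) //= eqxx mul1r big1 ?addr0 // => k.
by rewrite -val_eqE /= => /negPf ->; rewrite mul0r.
Qed.

Definition diag_of n (f : 'I_n -> F) : 'M[F]_n := diag_mx (\row_i f i).

Lemma diag_ofE n (f : 'I_n -> F) i j : diag_of f i j = (i == j)%:R * f i.
Proof. by rewrite !mxE mulr_natl. Qed.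

Lemma eq_diag_of n (f g : 'I_n -> F) : f =1 g -> diag_of f = diag_of g.
Proof. by move=> eq_fg; apply/matrixP=> i j; rewrite !diag_ofE eq_fg. Qed.

Lemma mul_diag_of n (f g : 'I_n -> F) :
  diag_of f *m diag_of g = diag_of (fun i => f i * g i).
Proof. by rewrite mulmx_diag; congr diag_mx; apply/matrixP=> i j; rewrite !mxE. Qed.

Lemma castmx_diag_of a b (e : a = b) (f : 'I_a -> F) :
  castmx (e, e) (diag_of f) = diag_of (fun i => f (cast_ord (esym e) i)).
Proof.
apply/matrixP => i j; rewrite castmxE !diag_ofE /=.
by rewrite (inj_eq (@cast_ord_inj _ _ (esym e))).
Qed.

Lemma mulmx_diag_of_weight m n (A : 'M[F]_(m, n)) (w : 'I_n -> nat) (g : nat -> F) :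
  (forall i k, A i k != 0 -> w k = i) ->
  A *m diag_of (fun k => g (w k)) = diag_of (fun i => g i) *m A.
Proof.
move=> wA; apply/matrixP => i k; rewrite mul_mx_diag mul_diag_mx !mxE.
by have [->|/wA ->] := eqVneq (A i k) 0; rewrite ?mul0r ?mulr0 // mulrC.
Qed.

Lemma ltop_scale_diag m d (c : F) (A : lmx F m m) f : c != 0 ->
  ltop d A (diag_of f) -> ltop d (lscale c A) (diag_of (fun i => c ^+ d * f i)).
Proof.
move=> c_neq0 /(ltop_scale c_neq0); congr ltop.
by apply/matrixP => i j; rewrite mxE !diag_ofE mulrCA.
Qed.

Lemma ltop_sandwich m n dX dY (P : 'M[F]_(m, n)) (Q : 'M[F]_(n, m)) X Y f g M :
  ltop dX X (diag_of f) -> ltop dY Y (diag_of g) ->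
  P *m diag_of (fun i => f i * g i) *m Q = M ->
  ltop (dX + dY) (lmul (lmul (lmul (lconst P) X) Y) (lconst Q)) M.
Proof.
move=> topX topY <-.
have := ltop_mul (ltop_mul (ltop_mul (ltop_const P) topX) topY) (ltop_const Q).
by rewrite add0n addn0 -(mulmxA P) mul_diag_of.
Qed.

End TopCoefficient.

Lemma mxtens_index_inj m n : injective (@mxtens_index m n).
Proof. exact: can_inj (@mxtens_indexK m n). Qed.

Lemma mxtens_unindex1 m n (a : 'I_m) (b : 'I_n) : (unidx (idx (a, b))).1 = a.
Proof. by rewrite mxtens_indexK. Qed.

Lemma mxtens_unindex2 m n (a : 'I_m) (b : 'I_n) : (unidx (idx (a, b))).2 = b.
Proof. by rewrite mxtens_indexK. Qed.

Lemma cast_mxtens_index_assoc n1 n2 n3 (e : n1 * n2 * n3 = n1 * (n2 * n3))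
    (a : 'I_n1) (b : 'I_n2) (c : 'I_n3) :
  cast_ord e (idx (idx (a, b), c)) = idx (a, idx (b, c)).
Proof. by apply: val_inj; rewrite /= mulnDl -mulnA addnA. Qed.

Lemma cast_mxtens_index_assocV n1 n2 n3 (e : n1 * (n2 * n3) = n1 * n2 * n3)
    (a : 'I_n1) (b : 'I_n2) (c : 'I_n3) :
  cast_ord e (idx (a, idx (b, c))) = idx (idx (a, b), c).
Proof. by apply: val_inj; rewrite /= mulnDl -mulnA addnA. Qed.

Definition index_sum m n (k : 'I_(m * n)) : nat := (unidx k).1 + (unidx k).2.

Section TensorLegs.
Variable F : fieldType.

Lemma ltop_reindex m n d (X : lmx F m m) (Y : lmx F n n) (T : eqType)
    (u : 'I_n -> 'I_m) (w : 'I_n -> T) (f : 'I_m -> F) :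
  lsh Y = lsh X ->
  (forall i j, lpm Y i j = lpm X (u i) (u j) * (w i == w j)%:R) ->
  injective (fun i => (u i, w i)) ->
  ltop d X (diag_of f) -> ltop d Y (diag_of (fun i => f (u i))).
Proof.
move=> shY Y_E uw_inj [degX topX]; split=> [i j | ].
  by rewrite Y_E shY; case: (w i == w j); rewrite ?mulr1 ?mulr0 ?size_poly0 ?degX.
apply/matrixP => i j; rewrite diag_ofE mxE Y_E shY -(inj_eq uw_inj) xpair_eqE.
move/matrixP: topX => /(_ (u i) (u j)); rewrite diag_ofE mxE.
by case: (w i == w j); rewrite ?andbT ?andbF ?mulr1 ?mulr0 ?coef0 ?mul0r.
Qed.

Lemma ltop_leg12 n1 n2 n3 d (X : lmx F (n1 * n2) (n1 * n2)) f :
  ltop d X (diag_of f) -> ltop d (leg12 n3 X) (diag_of (fun i => f (unidx i).1)).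
Proof.
apply: (ltop_reindex (w := fun i => (unidx i).2)) => // [i j | i j].
  by rewrite /= !mxE.
case: (mxtens_indexP i) => a b; case: (mxtens_indexP j) => a' b'.
by rewrite !mxtens_indexK /= => /pair_equal_spec[-> ->].
Qed.

Definition swap23 n1 n2 n3 (i : 'I_(n1 * n2 * n3)) : 'I_(n1 * n3 * n2) :=
  idx (idx ((unidx (unidx i).1).1, (unidx i).2), (unidx (unidx i).1).2).

Lemma flipmxE n1 n2 n3 : flipmx F n1 n2 n3 = mxsub (@swap23 n1 n2 n3) id 1%:M.
Proof.
apply/matrixP => i k; rewrite !mxE /swap23.
case: (mxtens_indexP i) => i12 i3; case: (mxtens_indexP i12) => i1 i2.
case: (mxtens_indexP k) => k13 k2; case: (mxtens_indexP k13) => k1 k3.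
rewrite !mxtens_indexK /= !(inj_eq (@mxtens_index_inj _ _), xpair_eqE).
by case: (i1 == k1); case: (i2 == k2); case: (i3 == k3).
Qed.

Lemma ltop_leg13 n1 n2 n3 d (X : lmx F (n1 * n3) (n1 * n3)) f :
  ltop d X (diag_of f) ->
  ltop d (leg13 n2 X) (diag_of (fun i => f (idx ((unidx (unidx i).1).1, (unidx i).2)))).
Proof.
apply: (ltop_reindex (w := fun i => (unidx (unidx i).1).2)) => // i j;
  case: (mxtens_indexP i) => i12 i3; case: (mxtens_indexP i12) => i1 i2;
  case: (mxtens_indexP j) => j12 j3; case: (mxtens_indexP j12) => j1 j2.
  rewrite [lpm _]/= flipmxE trmx_mxsub trmx1 mul_rowsub_mx mul1mx mulmx_colsub.
  by rewrite mulmx1 !mxE /swap23 !mxtens_indexK.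
by rewrite !mxtens_indexK /= => /pair_equal_spec[/mxtens_index_inj/pair_equal_spec[-> ->] ->].
Qed.

Lemma ltop_leg23 n1 n2 n3 d (X : lmx F (n2 * n3) (n2 * n3)) f :
  ltop d X (diag_of f) ->
  ltop d (leg23 n1 X) (diag_of (fun i => f (idx ((unidx (unidx i).1).2, (unidx i).2)))).
Proof.
apply: (ltop_reindex (w := fun i => (unidx (unidx i).1).1)) => // i j;
  case: (mxtens_indexP i) => i12 i3; case: (mxtens_indexP i12) => i1 i2;
  case: (mxtens_indexP j) => j12 j3; case: (mxtens_indexP j12) => j1 j2.
  rewrite [lpm _]/= castmxE !cast_mxtens_index_assoc tensmxE !mxtens_indexK.
  by rewrite mxE mulrC.
by rewrite !mxtens_indexK /= => /pair_equal_spec[/mxtens_index_inj/pair_equal_spec[-> ->] ->].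
Qed.

Lemma diag_of_tens_sumr m n (h : 'I_m -> 'I_n -> F) :
  diag_of (fun i => h (unidx i).1 (unidx i).2) =
  \sum_(c < n) diag_of (h^~ c) *t delta_mx c c.
Proof.
apply/matrixP => i j; rewrite summxE.
case: (mxtens_indexP i) => i1 i2; case: (mxtens_indexP j) => j1 j2.
under eq_bigr => c _ do rewrite tensmxE diag_ofE mxE.
rewrite diag_ofE !mxtens_indexK (inj_eq (@mxtens_index_inj _ _)) xpair_eqE.
rewrite (bigD1 i2) //= big1 ?addr0 => [|c]; last first.
  by rewrite eq_sym => /negbTE ->; rewrite mulr0.
rewrite eqxx (eq_sym j2).
by case: (i1 == j1); case: (i2 == j2); rewrite /= ?mulr1 ?mulr0 ?mul0r ?mul1r.
Qed.

Lemma diag_of_tens_suml m n (h : 'I_m -> 'I_n -> F) :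
  diag_of (fun i => h (unidx i).1 (unidx i).2) =
  \sum_(a < m) delta_mx a a *t diag_of (h a).
Proof.
apply/matrixP => i j; rewrite summxE.
case: (mxtens_indexP i) => i1 i2; case: (mxtens_indexP j) => j1 j2.
under eq_bigr => a _ do rewrite tensmxE diag_ofE mxE.
rewrite diag_ofE !mxtens_indexK (inj_eq (@mxtens_index_inj _ _)) xpair_eqE.
rewrite (bigD1 i1) //= big1 ?addr0 => [|a]; last first.
  by rewrite eq_sym => /negbTE ->; rewrite mul0r.
rewrite eqxx (eq_sym j1).
by case: (i1 == j1); case: (i2 == j2); rewrite /= ?mulr1 ?mulr0 ?mul0r ?mul1r.
Qed.

Lemma tensmx1_conj_diag m n p (P : 'M[F]_(m, n)) (Q : 'M[F]_(n, m)) (w : 'I_n -> nat) :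
  (forall g : nat -> F, P *m diag_of (fun k => g (w k)) *m Q = diag_of (fun i => g i)) ->
  forall G : nat -> 'I_p -> F,
  (P *t 1%:M) *m diag_of (fun i => G (w (unidx i).1) (unidx i).2) *m (Q *t 1%:M) =
  diag_of (fun i => G (unidx i).1 (unidx i).2).
Proof.
move=> PQ G; rewrite (diag_of_tens_sumr (fun k c => G (w k) c)) mulmx_sumr mulmx_suml.
rewrite (diag_of_tens_sumr (fun i c => G i c)); apply: eq_bigr => c _.
by rewrite !tensmx_mul mul1mx mulmx1 (PQ (G^~ c)).
Qed.

Lemma tens1mx_conj_diag m n p (P : 'M[F]_(m, n)) (Q : 'M[F]_(n, m)) (w : 'I_n -> nat) :
  (forall g : nat -> F, P *m diag_of (fun k => g (w k)) *m Q = diag_of (fun i => g i)) ->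
  forall G : 'I_p -> nat -> F,
  (1%:M *t P) *m diag_of (fun i => G (unidx i).1 (w (unidx i).2)) *m (1%:M *t Q) =
  diag_of (fun i => G (unidx i).1 (unidx i).2).
Proof.
move=> PQ G; rewrite (diag_of_tens_suml (fun a k => G a (w k))) mulmx_sumr mulmx_suml.
rewrite (diag_of_tens_suml (fun a i => G a i)); apply: eq_bigr => a _.
by rewrite !tensmx_mul mul1mx mulmx1 (PQ (G a)).
Qed.

Lemma castmx_conj p q a b (e : a = b) (A : 'M[F]_(p, a)) (D : 'M[F]_b) (B : 'M[F]_(a, q)) :
  castmx (erefl, e) A *m D *m castmx (e, erefl) B = A *m castmx (esym e, esym e) D *m B.
Proof. by case: b / e D => D; rewrite !castmx_id. Qed.

End TensorLegs.

Section QuantumSetting.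
Variables (F : fieldType) (sqrtF : F -> F) (qh : F).
Hypothesis char_F0 : [pchar F] =i pred0.
Hypothesis sqrt_sq : forall x : F, sqrtF x ^+ 2 = x.
Hypothesis qh_neq0 : qh != 0.
Hypothesis q_not_root1 : forall k : nat, (0 < k)%N -> (qh ^+ 2) ^+ k != 1.

Local Notation q := (qq qh).
Local Notation qn := (qnum qh).

Lemma qq_neq0 : q != 0.
Proof. exact: expf_neq0. Qed.

Lemma qq_expf_eq1 k : q ^+ k = 1 -> k = 0%N.
Proof. by case: k => // k /eqP; rewrite (negPf (q_not_root1 _)). Qed.

Lemma qq_expf_inj a b : q ^+ a = q ^+ b -> a = b.
Proof.
wlog le_ab : a b / (a <= b)%N.
  by move=> W e; case: (leqP a b) => [|/ltnW] le; [exact: W | exact: esym (W b a le (esym e))].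
rewrite -(subnKC le_ab) exprD -{1}[q ^+ a]mulr1 => /(mulfI (expf_neq0 a qq_neq0)).
by move/esym/qq_expf_eq1 ->; rewrite addn0.
Qed.

Lemma qq_sub_inv_neq0 : q - q^-1 != 0.
Proof.
rewrite subr_eq0; apply/eqP => /(congr1 ( *%R q)); rewrite /= mulfV ?qq_neq0 //.
by rewrite -expr2 -(expr0 q) => /qq_expf_inj.
Qed.

Lemma qnum0 : qn 0 = 0.
Proof. by rewrite /qnum !expr0 invr1 subrr mul0r. Qed.

Lemma qnum_add_neq0 a b : (0 < a + b)%N -> qn a + qn b != 0.
Proof.
move=> ab_gt0; have qa := expf_neq0 a qq_neq0; have qb := expf_neq0 b qq_neq0.
have -> : qn a + qn b =
    (q ^+ a + q ^+ b) * (q ^+ (a + b) - 1) / (q ^+ a * q ^+ b * (q - q^-1)).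
  rewrite /qnum exprD; field; rewrite qq_neq0 qa qb subr_eq0 -expr2 /= andbT.
  by apply/eqP => /qq_expf_eq1.
apply: mulf_neq0; last by rewrite invr_neq0 // !mulf_neq0 // qq_sub_inv_neq0.
apply: mulf_neq0.
  apply/eqP => /eqP; rewrite addr_eq0 => /eqP qa_opp.
  have eq_ab : a = b.
    have : q ^+ (a * 2) = q ^+ (b * 2) by rewrite !exprM qa_opp sqrrN.
    by move/qq_expf_inj; lia.
  move: qa_opp; rewrite eq_ab => /eqP; rewrite -addr_eq0 -mulr2n -mulr_natl.
  by rewrite mulf_eq0 (pcharf0P F).1 // (negPf qb).
by rewrite subr_eq0; apply/eqP => /qq_expf_eq1 ab0; rewrite ab0 in ab_gt0.
Qed.

Lemma qnumS_neq0 n : qn n.+1 != 0.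
Proof. by have := @qnum_add_neq0 n.+1 0 isT; rewrite qnum0 addr0. Qed.

Local Notation sq n := (sqrtF (qn n)).
Local Notation cgden N r := (qn (N.+1 - r)%N + qn r).

Lemma Fmx_low N (r : 'I_N.+2) (k : 'I_(2 * N.+1)) : (k <= N)%N ->
  Fmx sqrtF qh N r k = (k == r :> nat)%:R * (sq (N.+1 - r)%N * sq N.+1 / cgden N r).
Proof.
move=> le_kN; rewrite mxE eq_sym; case: eqP => [_ | _]; first by rewrite le_kN mul1r.
by rewrite mul0r; case: ifP => // /andP[/eqP eq_k lt0r]; lia.
Qed.

Lemma Fmx_high N (r : 'I_N.+2) (k : 'I_(2 * N.+1)) : (N < k)%N ->
  Fmx sqrtF qh N r k = (k == (r + N)%N :> nat)%:R * (sq r * sq N.+1 / cgden N r).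
Proof.
move=> lt_Nk; rewrite mxE (leqNgt k N) lt_Nk andbF /=.
case: eqP => [eq_k | _]; last by rewrite mul0r.
by rewrite (_ : (0 < r)%N) ?mul1r //; lia.
Qed.

Lemma Emx_low N (k : 'I_(2 * N.+1)) (r : 'I_N.+2) : (k <= N)%N ->
  Emx sqrtF qh N k r = (k == r :> nat)%:R * (sq (N.+1 - k)%N / sq N.+1).
Proof.
move=> le_kN; rewrite mxE; case: eqP => [eq_k | _]; first by rewrite -eq_k le_kN mul1r.
by rewrite mul0r; case: ifP => // /andP[/eqP eq_k lt0r]; lia.
Qed.

Lemma Emx_high N (k : 'I_(2 * N.+1)) (r : 'I_N.+2) : (N < k)%N ->
  Emx sqrtF qh N k r = (k == (r + N)%N :> nat)%:R * (sq r / sq N.+1).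
Proof.
move=> lt_Nk; rewrite mxE; case: ifP => [/andP[/eqP eq_k le_rN] | _]; first lia.
case: eqP => [eq_k | _]; last by rewrite mul0r.
by rewrite (_ : (0 < r)%N) ?mul1r //; lia.
Qed.

Lemma sq_mul_sq n : sq n * sq n = qn n.
Proof. by rewrite -expr2 sqrt_sq. Qed.

Lemma sqS_neq0 n : sq n.+1 != 0.
Proof. by apply: contraNneq (qnumS_neq0 n) => sq0; rewrite -sq_mul_sq sq0 mul0r. Qed.

Lemma cgden_neq0 N (r : 'I_N.+2) : cgden N r != 0.
Proof. by apply: qnum_add_neq0; rewrite subnK // -ltnS. Qed.

(* The boundary terms vanish because [0]_q = 0. *)
Lemma Fmx_Emx_entry N (r r' : 'I_N.+2) (k : 'I_(2 * N.+1)) :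
  Fmx sqrtF qh N r k * Emx sqrtF qh N k r' =
  (r == r' :> nat)%:R * ((k == r :> nat)%:R * (qn (N.+1 - r)%N / cgden N r)
                          + (k == (r + N)%N :> nat)%:R * (qn r / cgden N r)).
Proof.
have sqN := sqS_neq0 N; have cg_neq0 := cgden_neq0 r.
case: (leqP k N) => [le_kN | lt_Nk].
  rewrite Fmx_low // Emx_low //; set cg := cgden N r in cg_neq0 *.
  have -> : (k == (r + N)%N :> nat)%:R * (qn r / cg) = 0.
    have [eq_k | _] := eqVneq (k : nat) (r + N)%N; last by rewrite mul0r.
    by rewrite (_ : (r : nat) = 0%N) ?qnum0 ?mul0r ?mulr0 //; lia.
  rewrite addr0; have [eq_k | _] := eqVneq (k : nat) r; last by rewrite !(mul0r, mulr0).
  rewrite eq_k !mul1r mulrCA; congr (_ * _); rewrite -[in RHS]sq_mul_sq; field.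
  by rewrite cg_neq0 sqN.
rewrite Fmx_high // Emx_high //; set cg := cgden N r in cg_neq0 *.
have -> : (k == r :> nat)%:R * (qn (N.+1 - r)%N / cg) = 0.
  have [eq_k | _] := eqVneq (k : nat) r; last by rewrite mul0r.
  by rewrite (_ : (N.+1 - r)%N = 0%N) ?qnum0 ?mul0r ?mulr0 //; move: (ltn_ord r); lia.
rewrite add0r; have [eq_k | _] := eqVneq (k : nat) (r + N)%N; last by rewrite !(mul0r, mulr0).
rewrite eq_k eqn_add2r; have [<- | _] := eqVneq (r : nat) r'; last by rewrite !(mul0r, mulr0).
rewrite !mul1r -[in RHS]sq_mul_sq; field.
by rewrite cg_neq0 sqN.
Qed.

Lemma mulmx_Fmx_Emx N : Fmx sqrtF qh N *m Emx sqrtF qh N = 1%:M.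
Proof.
apply/matrixP => r r'; rewrite !mxE.
under eq_bigr do rewrite Fmx_Emx_entry.
rewrite -mulr_sumr big_split /= !sum_ord_eq.
have [lt_r lt_rN] : (r < 2 * N.+1)%N /\ (r + N < 2 * N.+1)%N by move: (ltn_ord r); lia.
by rewrite lt_r lt_rN !mul1r -mulrDl divff ?cgden_neq0 ?mulr1.
Qed.

Lemma Fmx_index_sum N r k : Fmx sqrtF qh N r k != 0 -> index_sum k = r.
Proof.
have nz_true (c : bool) (x : F) : c%:R * x != 0 -> c by case: c; rewrite ?mul0r ?eqxx.
case: (leqP k N) => [le_kN | lt_Nk].
  rewrite Fmx_low // => /nz_true/eqP.
  by case: (mxtens_indexP k) le_kN => -[[|[|//]] ?] b;
    rewrite /index_sum mxtens_indexK /=; lia.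
rewrite Fmx_high // => /nz_true/eqP.
by case: (mxtens_indexP k) lt_Nk => -[[|[|//]] ?] b; move: (ltn_ord b);
  rewrite /index_sum mxtens_indexK /=; lia.
Qed.

Lemma Fmx_diag_Emx N (g : nat -> F) :
  Fmx sqrtF qh N *m diag_of (fun k => g (index_sum k)) *m Emx sqrtF qh N =
  diag_of (fun r => g r).
Proof.
by rewrite (mulmx_diag_of_weight g (@Fmx_index_sum N)) -mulmxA mulmx_Fmx_Emx mulmx1.
Qed.

(* (2 j1)(2 j2) + (2 alpha)(2 beta) at the weights alpha = j1 - a, beta = j2 - c,
   so that qh ^ spin_exp = q^(2 j1 j2 + 2 alpha beta). *)
Definition spin_exp (n1 n2 a c : nat) : int :=
  n1.+1%:Z * n2.+1%:Z + (n1.+1%:Z - 2 * a%:Z) * (n2.+1%:Z - 2 * c%:Z).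

Definition Rlead n1 n2 : 'M[F]_(n1.+2 * n2.+2) :=
  diag_of (fun i => qh ^ spin_exp n1 n2 (unidx i).1 (unidx i).2).

Lemma ltop_R11 : ltop 1 (R11 qh) (Rlead 0 0).
Proof.
split=> [i j | ].
  apply/leq_sizeP => k le3k; rewrite /= mxE.
  have [k0 k1 k2] : [/\ (k == 0)%N = false, (k == 1)%N = false & (k == 2)%N = false].
    by split; apply/negbTE; rewrite /= in le3k; lia.
  by do 3?case: ifP => _;
    rewrite ?(coefB, coefZ, coefXn, coefC, coef1, coefX, coef0) ?k0 ?k1 ?k2 ?mulr0 ?subr0.
apply/matrixP => i j; rewrite diag_ofE mxE /= mxE.
case: i => [[|[|[|[|i]]]] lt_i4] //; case: j => [[|[|[|[|j]]]] lt_j4] //=.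
all: rewrite ?mul0r ?coef0 ?coefZ ?coefX ?mulr0 // mul1r.
all: by rewrite ?(coefB, coefZ, coefXn, coefC, coef1) /= ?mulr1 ?subr0.
Qed.

Lemma ltop_Rh n : ltop n.+1 (Rh sqrtF qh n) (Rlead 0 n).
Proof.
elim: n => [|m IHm]; first exact: ltop_R11.
have top13 := ltop_leg13 2 (ltop_scale_diag (invr_neq0 qh_neq0) IHm).
have top12 := ltop_leg12 m.+2 (ltop_scale_diag (expf_neq0 m.+1 qh_neq0) ltop_R11).
rewrite -[X in ltop X _ _]addn1; apply: (ltop_sandwich top13 top12).
rewrite castmx_conj castmx_diag_of.
rewrite /Rlead -(tens1mx_conj_diag (Fmx_diag_Emx m.+1)
  (fun (a : 'I_2) s => qh ^ spin_exp 0 m.+1 a s)).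
congr (_ *m _ *m _); apply: eq_diag_of => i.
case: (mxtens_indexP i) => a k; case: (mxtens_indexP k) => b c.
rewrite (cast_mxtens_index_assocV _ a b c) /index_sum !(mxtens_unindex1, mxtens_unindex2).
rewrite expr1 !exprnP exprz_inv -!expfzDr //; congr (qh ^ _).
by rewrite /spin_exp !PoszD !intS; ring.
Qed.

Lemma ltop_Rmat n1 n2 :
  ltop (n1.+1 * n2.+1) (Rmat sqrtF qh n1 n2) (Rlead n1 n2).
Proof.
elim: n1 => [|m IHm]; first by rewrite mul1n; exact: ltop_Rh.
have top13 := ltop_leg13 m.+2
  (ltop_scale_diag (invr_neq0 (expf_neq0 m.+1 qh_neq0)) (ltop_Rh n2)).
have top23 := ltop_leg23 2 (ltop_scale_diag qh_neq0 IHm).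
rewrite [X in ltop X _ _]mulSn; apply: (ltop_sandwich top13 top23).
rewrite /Rlead -(tensmx1_conj_diag (Fmx_diag_Emx m.+1)
  (fun s (c : 'I_n2.+2) => qh ^ spin_exp m.+1 n2 s c)).
congr (_ *m _ *m _); apply: eq_diag_of => i.
case: (mxtens_indexP i) => k c; case: (mxtens_indexP k) => a b.
rewrite /index_sum !(mxtens_unindex1, mxtens_unindex2).
rewrite exprVn -exprM exprnN !exprnP -!expfzDr //; congr (qh ^ _).
by rewrite /spin_exp !PoszD !PoszM !intS; ring.
Qed.

Lemma Rlead_Rhat n1 n2 : Rlead n1 n2 = qh ^+ (n1.+1 * n2.+1) *: Rhat qh n1 n2.
Proof.
apply/matrixP => i j; rewrite diag_ofE !mxE.
case: (mxtens_indexP i) => a c; rewrite !mxtens_indexK /=.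
by rewrite mulrCA exprnP -expfzDr //; congr (_ * qh ^ _).
Qed.

End QuantumSetting.

Theorem proposition5p3 (F : fieldType) (sqrtF : F -> F) (qh : F)
  (Hchar : [pchar F] =i pred0)
  (Hsqrt : forall x : F, sqrtF x ^+ 2 = x)
  (Hqh : qh != 0)
  (Hq : forall k : nat, (0 < k)%N -> (qh ^+ 2) ^+ k != 1)
  (n1 n2 : nat) :
  ldeg_le (n1.+1 * n2.+1) (Rmat sqrtF qh n1 n2) /\
  lcoef (n1.+1 * n2.+1) (Rmat sqrtF qh n1 n2)
    = qh ^+ (n1.+1 * n2.+1) *: Rhat qh n1 n2.
Proof. by rewrite -Rlead_Rhat //; apply: ltop_Rmat. Qed.
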